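(* Let $d\ge 1$ be an integer and let $\mathcal{P}$ be the set of all (nonempty) integer partitions. As formal power series, $$\sum_{\lambda\in\mathcal{P}}t^{\mathrm{mod}_d(\lambda)}x^{\ell(\lambda)}y^{\lambda_1}=\frac{txy(1-x)^d+\frac{xy}{x+y-1}\left(y^{d+1}-y(1-x)^d\right)}{(1-tx)(1-x)^d-y^{d+1}}.$$ In particular, $$\sum_{\lambda\in\mathcal{P}}t^{\mathrm{mod}'_d(\lambda)}x^{\Gamma(\lambda)}=\frac{x\left(tx^{d+1}+(1-tx)^d(x-1)\right)}{(1-x-tx)\left((1-tx)^d(x-1)+x^{d+1}\right)}.$$
   Context: A partition is a finite nonempty weakly decreasing sequence $\lambda=(\lambda_1,\ldots,\lambda_k)$ of positive integers; $\ell(\lambda)=k$ and $\lambda_1$ is the largest part. The perimeter is $\Gamma(\lambda)=\lambda_1+\ell(\lambda)-1$. $\mathrm{mod}_d(\lambda)=|\{i:\lambda_i\equiv 1\pmod{d+1}\}|$ and $\mathrm{mod}'_d(\lambda)=\ell(\lambda)-\mathrm{mod}_d(\lambda)$ (the number of parts not congruent to $1$ modulo $d+1$). *)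

From mathcomp Require Export all_boot all_order all_algebra.
Set Implicit Arguments. Unset Strict Implicit. Unset Printing Implicit Defensive.
Import GRing.Theory Num.Theory.

Definition is_partition (s : seq nat) : bool :=
  [&& s != [::], sorted geq s & all (fun a => 0 < a) s].
(* largest part lambda_1 and length ell(lambda) = size s *)
Definition largest (s : seq nat) : nat := head 0 s.
Definition perimeter (s : seq nat) : nat := largest s + size s - 1.
Definition mod_d (d : nat) (s : seq nat) : nat :=
  count (fun a => a %% d.+1 == 1 %% d.+1) s.
Definition mod'_d (d : nat) (s : seq nat) : nat := size s - mod_d d s.

(* Number of partitions with mod_d = j, length k and largest part m.
   Such partitions are exactly the k-tuples with entries in [0,m]
   that are partitions with largest part m. *)
Definition coefA (d j k m : nat) : nat :=
  #|[set u : k.-tuple 'I_m.+1 |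
      let s := map val u in
      [&& is_partition s, largest s == m & mod_d d s == j]]|.

(* Number of partitions with mod'_d = j and perimeter g.  Such a partition
   has length k <= g and all parts <= g. *)
Definition coefB (d j g : nat) : nat :=
  \sum_(k < g.+1)
    #|[set u : k.-tuple 'I_g.+1 |
        let s := map val u in
        [&& is_partition s, perimeter s == g & mod'_d d s == j]]|.

(* ---------- Formal power series in t, x, y over int ----------
   A series is its coefficient function: f a b c = coefficient of t^a x^b y^c. *)
Definition series := nat -> nat -> nat -> int.

Definition sadd (f g : series) : series := fun a b c => (f a b c + g a b c)%R.
Definition sopp (f : series) : series := fun a b c => (- f a b c)%R.
Definition smul (f g : series) : series := fun a b c =>
  (\sum_(i < a.+1) \sum_(j < b.+1) \sum_(k < c.+1)
      f i j k * g (a - i)%N (b - j)%N (c - k)%N)%R.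
Definition smono (p q r : nat) : series := fun a b c =>
  if [&& a == p, b == q & c == r] then 1%R else 0%R.
Definition sone : series := smono 0 0 0.
Definition sT : series := smono 1 0 0.
Definition sX : series := smono 0 1 0.
Definition sY : series := smono 0 0 1.
Definition spow (f : series) (n : nat) : series := iter n (smul f) sone.

Declare Scope series_scope.
Delimit Scope series_scope with ser.
Notation "f + g" := (sadd f g) : series_scope.
Notation "f - g" := (sadd f (sopp g)) : series_scope.
Notation "f * g" := (smul f g) : series_scope.
Notation "f ^ n" := (spow f n) : series_scope.
Notation "1" := sone : series_scope.

From HB Require Import structures.
From mathcomp Require Import boolp ring zify.
Import GRing.Theory.

(* Weight a part v by w v (here the indicator of v = 1 or v <> 1 mod d+1).  The
   series h_m of partitions with parts <= m, counted by total weight (t) and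
   length (x), is prod_(v <= m) 1/(1 - t^(w v) x).  Partitions with largest
   part m contribute y^m (h_m - h_(m-1)), so F + 1 = (1 - y) sum_m y^m h_m;
   likewise x G + 1 = (1 - x) sum_m x^m h_m, as the perimeter is m + length - 1.
   As w is (d+1)-periodic, h_(m+d+1) A = h_m with
   A = prod_(v <= d+1) (1 - t^(w v) x) = (1 - t^(w 1) x) (1 - t^e x)^d, where
   e is the common weight of 2, ..., d+1.  Hence S = sum_m z^m h_m (z = y or
   z = x) satisfies S (A - z^(d+1)) = sum_(m <= d) z^m h_m A, a geometric sum
   in z and 1 - t^e x; solving for S gives both identities.  Power series are
   coefficient functions, made into a commutative ring by comparing
   coefficients with those of truncated trivariate polynomials. *)

Fixpoint decseqs (m : nat) : nat -> seq (seq nat) :=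
  match m with
  | 0 => fun k => if k is 0 then [:: [::]] else [::]
  | m'.+1 => fix decseqsS k := match k with
              | 0 => [:: [::]]
              | k'.+1 => decseqs m' k ++ map (cons m'.+1) (decseqsS k')
             end
  end.

Lemma decseqs0 m : decseqs m 0 = [:: [::]].
Proof. by case: m. Qed.

Lemma decseqsSS m k :
  decseqs m.+1 k.+1 = decseqs m k.+1 ++ map (cons m.+1) (decseqs m.+1 k).
Proof. by []. Qed.

Lemma mem_map_cons (T : eqType) (x y : T) (L : seq (seq T)) s :
  (y :: s \in map (cons x) L) = (y == x) && (s \in L).
Proof. by apply/mapP/andP => [[s' Ls' [-> ->]] | [/eqP -> Ls]]; last exists s. Qed.

Lemma mem_decseqs m k s :
  (s \in decseqs m k) = [&& size s == k, sorted geq s & all (fun a => 0 < a <= m) s].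
Proof.
elim: m k s => [|m IHm] k s.
  case: k => [|k]; case: s => [|x s] //=.
  by rewrite in_nil; case: x => [|x] /=; rewrite ?ltnn ?andbF.
elim: k s => [|k IHk] s; first by rewrite decseqs0 mem_seq1; case: s.
rewrite decseqsSS mem_cat IHm; case: s => [|x s]; first by apply/negbTE/mapP => -[].
rewrite mem_map_cons IHk /= !(path_sortedE (rev_trans leq_trans)) eqSS.
have bounded_all (P Q : pred nat) : {in [pred a | a <= x], P =1 Q} ->
    all (geq x) s -> all P s = all Q s.
  by move=> eqPQ /allP lesx; apply: eq_in_all => a /lesx; apply: eqPQ.
case: (ltngtP x m.+1) => [lexm | ltmx | ->] /=; rewrite ?orbF.
- move: lexm; rewrite ltnS => lexm; rewrite lexm !andbT.
  case: (boolP (all _ s)) => //= lesx.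
  rewrite (bounded_all _ (fun a => 0 < a <= m.+1)) // => a; rewrite inE => leax.
  by rewrite (leq_trans leax lexm) (leq_trans leax (leqW lexm)).
- have /negbTE-> : ~~ (x <= m) by rewrite -ltnNge ltnW.
  by rewrite !andbF.
rewrite ltnn /= !andbF /=.
case: (boolP (all _ s)) => [/allP bounded_s|]; rewrite ?andbF //.
by rewrite (_ : all _ s) //; apply/allP => a /bounded_s /andP [].
Qed.

Lemma uniq_decseqs m k : uniq (decseqs m k).
Proof.
elim: m k => [|m IHm] k; first by case: k.
elim: k => [|k IHk] //; rewrite decseqsSS cat_uniq IHm map_inj_uniq ?IHk ?andbT.
  by apply/hasPn => s /mapP [s' _ ->]; rewrite mem_decseqs /= ltnn !andbF.
by move=> x y [].
Qed.

Lemma count_decseqsS (P : pred (seq nat)) m k :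
  count P (decseqs m.+1 k) =
  count P (decseqs m k) + count (fun s => (largest s == m.+1) && P s) (decseqs m.+1 k).
Proof.
case: k => [|k]; first by rewrite !decseqs0 /= !addn0.
rewrite decseqsSS !count_cat; congr (_ + _).
rewrite [X in _ = X + _](eq_in_count (a2 := pred0)) ?count_pred0 => [|s]; last first.
  rewrite mem_decseqs; case: s => [|x s] //= /and4P [_ _ /andP [_ lexm] _].
  by rewrite ltn_eqF ?ltnS.
by rewrite add0n !count_map; apply: eq_count => s /=; rewrite eqxx.
Qed.

Lemma count_decseqs_le (P : pred (seq nat)) m n k : m <= n ->
  (forall s, s \in decseqs n k -> P s -> all (fun a => a <= m) s) ->
  count P (decseqs n k) = count P (decseqs m k).
Proof.
move=> lemn P_le; rewrite -!size_filter.
apply/perm_size/uniq_perm; rewrite ?filter_uniq ?uniq_decseqs // => s.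
rewrite !mem_filter; case: (boolP (P s)) => //= Ps; apply/idP/idP => s_dec.
  have /allP le_m := P_le s s_dec Ps; move: s_dec.
  rewrite !mem_decseqs => /and3P [-> -> /allP bounded_s].
  by apply/allP => a sa; rewrite le_m // andbT; case/andP: (bounded_s a sa).
move: s_dec; rewrite !mem_decseqs => /and3P [-> -> /allP bounded_s].
by apply/allP => a /bounded_s /andP [-> /leq_trans ->].
Qed.

Lemma card_tuple_decseqs m k (P : pred (seq nat)) :
  (forall s, P s -> sorted geq s && all (fun a => 0 < a) s) ->
  #|[set u : k.-tuple 'I_m.+1 | P (map val u)]| = count P (decseqs m k).
Proof.
move=> P_dec; rewrite cardE -(size_map (fun u : k.-tuple 'I_m.+1 => map val u)).
rewrite -size_filter; apply/perm_size/uniq_perm.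
- by rewrite map_inj_uniq ?enum_uniq // => u v /(inj_map val_inj)/val_inj.
- by rewrite filter_uniq ?uniq_decseqs.
move=> s; rewrite mem_filter; apply/mapP/andP => [[u] | [Ps]].
  rewrite mem_enum inE => Pu ->; split => //; have /andP [dec_u pos_u] := P_dec _ Pu.
  rewrite mem_decseqs size_map size_tuple eqxx dec_u /=.
  by apply/allP => _ /mapP [i iu ->]; rewrite (allP pos_u) ?map_f //=; exact: (ltn_ord i).
rewrite mem_decseqs => /and3P [/eqP size_s _ bounded_s].
have size_s' : size (map (@inord m) s) == k by rewrite size_map size_s.
have val_s : map val (map (@inord m) s) = s.
  by rewrite -map_comp map_id_in // => a /(allP bounded_s) /andP [_ lea]; rewrite /= inordK.
by exists (Tuple size_s'); rewrite ?mem_enum ?inE /= val_s.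
Qed.

Lemma all_le_largest s : sorted geq s -> all (fun a => a <= largest s) s.
Proof.
by case: s => [|x s] //=; rewrite (path_sortedE (rev_trans leq_trans)) leqnn => /andP [].
Qed.

Definition wsum (w : nat -> nat) (s : seq nat) : nat := sumn (map w s).

Definition npart (w : nat -> nat) (m k j : nat) : nat :=
  count (fun s => wsum w s == j) (decseqs m k).

Lemma npart0k w k j : npart w 0 k j = (k == 0) && (j == 0).
Proof. by case: k => [|k] //=; rewrite /npart /= addn0; case: j. Qed.

Lemma npartm0 w m j : npart w m 0 j = (j == 0).
Proof. by rewrite /npart decseqs0 /= addn0; case: j. Qed.

Lemma npartSS w m k j : npart w m.+1 k.+1 j =
  npart w m k.+1 j + (if w m.+1 <= j then npart w m.+1 k (j - w m.+1) else 0).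
Proof.
rewrite /npart decseqsSS count_cat count_map; congr (_ + _).
case: leqP => [lewj | ltjw].
  by apply: eq_count => s /=; apply/eqP/eqP; rewrite /wsum /=; lia.
apply/eqP; rewrite -leqn0 leqNgt -has_count; apply/hasPn => s _ /=.
by apply/eqP; rewrite /wsum /=; lia.
Qed.

Definition mod_weight (d v : nat) : nat := v %% d.+1 == 1 %% d.+1.
Definition mod'_weight (d v : nat) : nat := v %% d.+1 != 1 %% d.+1.

Lemma mod_d_wsum d s : mod_d d s = wsum (mod_weight d) s.
Proof. by rewrite /mod_d -sumn_count. Qed.

Lemma mod'_d_wsum d s : mod'_d d s = wsum (mod'_weight d) s.
Proof.
by rewrite /mod'_d /mod_d -(count_predC (fun a => a %% d.+1 == 1 %% d.+1)) addKn -sumn_count.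
Qed.

Lemma mod_weight_periodic d v : mod_weight d (v + d.+1) = mod_weight d v.
Proof. by rewrite /mod_weight modnDr. Qed.

Lemma mod'_weight_periodic d v : mod'_weight d (v + d.+1) = mod'_weight d v.
Proof. by rewrite /mod'_weight modnDr. Qed.

Lemma mod_weight1 d : mod_weight d 1 = 1.
Proof. by rewrite /mod_weight eqxx. Qed.

Lemma mod'_weight1 d : mod'_weight d 1 = 0.
Proof. by rewrite /mod'_weight eqxx. Qed.

Lemma mod_weight_ne1 d v : 2 <= v <= d.+1 -> mod_weight d v = 0.
Proof.
case/andP => le2v levd; rewrite /mod_weight (modn_small (_ : 1 < d.+1)) ?(leq_trans le2v) //.
case: (ltngtP v d.+1) levd => [ltvd _|//|->]; last by rewrite modnn.
by rewrite modn_small // gtn_eqF.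
Qed.

Lemma mod'_weight_ne1 d v : 2 <= v <= d.+1 -> mod'_weight d v = 1.
Proof. by move/mod_weight_ne1; rewrite /mod'_weight /mod_weight; case: eqP. Qed.

Lemma coefA_decseqs d j k m : coefA d j k m =
  count (fun s => [&& is_partition s, largest s == m & wsum (mod_weight d) s == j])
    (decseqs m k).
Proof.
rewrite /coefA (@card_tuple_decseqs m k
  (fun s => [&& is_partition s, largest s == m & mod_d d s == j])).
  by apply: eq_count => s; rewrite mod_d_wsum.
by move=> s /and3P [/and3P [_ -> ->]].
Qed.

Lemma coefB_term_decseqs d j g k : k <= g ->
  #|[set u : k.-tuple 'I_g.+1 | let s := map val u in
      [&& is_partition s, perimeter s == g & mod'_d d s == j]]| =
  count (fun s => (largest s == (g - k).+1) && (wsum (mod'_weight d) s == j))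
    (decseqs (g - k).+1 k).
Proof.
move=> le_kg; rewrite (@card_tuple_decseqs g k
  (fun s => [&& is_partition s, perimeter s == g & mod'_d d s == j])); last first.
  by move=> s /and3P [/and3P [_ -> ->]].
case: k le_kg => [|k] le_kg; first by rewrite !decseqs0.
rewrite (@eq_in_count _ _
  (fun s => (largest s == (g - k.+1).+1) && (wsum (mod'_weight d) s == j))).
  apply: count_decseqs_le => [|s]; first by rewrite subnSK // leq_subr.
  by rewrite mem_decseqs => /and3P [_ dec_s _] /andP [/eqP <- _]; apply: all_le_largest.
move=> s; rewrite mem_decseqs => /and3P [/eqP size_s dec_s /allP bounded_s].
have pos_s : all (fun v => 0 < v) s by apply/allP => v /bounded_s /andP [].
rewrite /is_partition -size_eq0 size_s dec_s pos_s mod'_d_wsum /perimeter size_s /=.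
by congr andb; apply/eqP/eqP; lia.
Qed.

Lemma coefB_decseqs d j g : coefB d j g =
  \sum_(i < g.+1) count (fun s => (largest s == i.+1) && (wsum (mod'_weight d) s == j))
    (decseqs i.+1 (g - i)).
Proof.
rewrite /coefB (reindex_inj rev_ord_inj); apply: eq_bigr => i _.
have -> : rev_ord i = g - i :> nat by rewrite /= subSS.
by rewrite coefB_term_decseqs ?leq_subr // subKn // -ltnS.
Qed.

Local Open Scope ring_scope.

Lemma series_ext (f g : series) : (forall a b c, f a b c = g a b c) -> f = g.
Proof. by move=> eqfg; do 3 apply: funext => ?; apply: eqfg. Qed.

Definition szero : series := fun _ _ _ => 0.

Definition coef3 (p : {poly {poly {poly int}}}) : series := fun a b c => p`_a`_b`_c.

Definition trunc3 (N : nat) (f : series) : {poly {poly {poly int}}} :=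
  \poly_(i < N) \poly_(j < N) \poly_(k < N) f i j k.

Lemma coef3M p q : coef3 (p * q) = smul (coef3 p) (coef3 q).
Proof.
do 3 apply: funext => ?; rewrite /coef3 /smul coefM !coef_sum; apply: eq_bigr => i _.
by rewrite coefM !coef_sum; apply: eq_bigr => j _; rewrite coefM.
Qed.

Lemma coef3_trunc N f i j k : (i < N)%N -> (j < N)%N -> (k < N)%N ->
  coef3 (trunc3 N f) i j k = f i j k.
Proof.
by move=> ltiN ltjN ltkN; rewrite /coef3 coef_poly ltiN coef_poly ltjN coef_poly ltkN.
Qed.

Lemma eq_smul_below f g f' g' a b c :
  (forall i j k, (i <= a)%N -> (j <= b)%N -> (k <= c)%N -> f i j k = f' i j k) ->
  (forall i j k, (i <= a)%N -> (j <= b)%N -> (k <= c)%N -> g i j k = g' i j k) ->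
  smul f g a b c = smul f' g' a b c.
Proof.
move=> eqf eqg; apply: eq_bigr => -[i lti] _; apply: eq_bigr => -[j ltj] _.
by apply: eq_bigr => -[k ltk] _ /=; rewrite eqf ?eqg ?leq_subr // -ltnS.
Qed.

Lemma smul_trunc N f g a b c : (a + b + c < N)%N ->
  smul f g a b c = coef3 (trunc3 N f * trunc3 N g) a b c.
Proof. by move=> ltN; rewrite coef3M; apply: eq_smul_below => *; rewrite coef3_trunc //; lia. Qed.

Lemma smulA : associative smul.
Proof.
move=> f g h; apply: series_ext => a b c; pose N := (a + b + c).+1.
transitivity (coef3 (trunc3 N f * (trunc3 N g * trunc3 N h)) a b c).
  rewrite coef3M; apply: eq_smul_below => *; rewrite ?coef3_trunc // -?smul_trunc //; lia.
rewrite mulrA coef3M; apply: eq_smul_below => *; rewrite ?coef3_trunc // -?smul_trunc //; lia.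
Qed.

Lemma smulC : commutative smul.
Proof.
move=> f g; apply: series_ext => a b c.
by rewrite (@smul_trunc (a + b + c).+1) // mulrC -smul_trunc.
Qed.

Lemma coef3_1 : coef3 1 = sone.
Proof.
apply: series_ext => a b c; rewrite /coef3 /sone /smono coef1.
case: a => [|a] /=; rewrite ?coef0 // coef1.
by case: b => [|b] /=; rewrite ?coef0 // coef1; case: (c == 0%N).
Qed.

Lemma smul1 : left_id sone smul.
Proof.
move=> f; apply: series_ext => a b c; pose N := (a + b + c).+1.
transitivity (coef3 (1 * trunc3 N f) a b c); last by rewrite mul1r coef3_trunc //; lia.
by rewrite coef3M coef3_1; apply: eq_smul_below => // *; rewrite coef3_trunc //; lia.
Qed.

Lemma smulDl : left_distributive smul sadd.
Proof.
move=> f g h; apply: series_ext => a b c; rewrite /smul /sadd -!big_split.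
apply: eq_bigr => i _; rewrite -!big_split; apply: eq_bigr => j _.
by rewrite -!big_split; apply: eq_bigr => k _; rewrite mulrDl.
Qed.

Lemma saddA : associative sadd.
Proof. by move=> f g h; apply: series_ext => a b c; rewrite /sadd addrA. Qed.

Lemma saddC : commutative sadd.
Proof. by move=> f g; apply: series_ext => a b c; rewrite /sadd addrC. Qed.

Lemma sadd0 : left_id szero sadd.
Proof. by move=> f; apply: series_ext => a b c; rewrite /sadd add0r. Qed.

Lemma saddN : left_inverse szero sopp sadd.
Proof. by move=> f; apply: series_ext => a b c; rewrite /sadd /sopp addNr. Qed.

Lemma sone_neq0 : sone != szero.
Proof. by apply/eqP => /(congr1 (fun f : series => f 0%N 0%N 0%N)). Qed.

HB.instance Definition _ := gen_eqMixin series.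
HB.instance Definition _ := gen_choiceMixin series.
HB.instance Definition _ := GRing.isZmodule.Build series saddA saddC sadd0 saddN.
HB.instance Definition _ :=
  GRing.Zmodule_isComNzRing.Build series smulA smulC smul1 smulDl sone_neq0.

Lemma spowE (f : series) n : spow f n = f ^+ n.
Proof. by elim: n => [|n IH] //=; rewrite exprS -IH. Qed.

Lemma series1E a b c :
  (1 : series) a b c = if [&& a == 0, b == 0 & c == 0]%N then 1 else 0.
Proof. by []. Qed.

Lemma series_subE (f g : series) a b c : (f - g) a b c = f a b c - g a b c.
Proof. by []. Qed.

Lemma series_sumE (I : Type) (r : seq I) (P : pred I) (F : I -> series) a b c :
  (\sum_(i <- r | P i) F i) a b c = \sum_(i <- r | P i) F i a b c.
Proof. by elim/big_rec2: _ => // i x y _ <-. Qed.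

Lemma sum_natr_eqM n m (F : 'I_n.+1 -> int) :
  \sum_(i < n.+1) (i == m :> nat)%:R * F i = if (m <= n)%N then F (inord m) else 0.
Proof.
under eq_bigr do rewrite mulr_natl mulrb; rewrite -big_mkcond.
case: leqP => [lemn | ltnm].
  by rewrite (big_pred1 (inord m)) // => i; rewrite /= -(inj_eq val_inj) /= inordK.
by rewrite big_pred0 // => i; apply/negbTE; rewrite neq_ltn (leq_trans (ltn_ord i)).
Qed.

Lemma smonoM_coef p q r f a b c :
  (smono p q r * f) a b c =
  if [&& p <= a, q <= b & r <= c]%N then f (a - p)%N (b - q)%N (c - r)%N else 0.
Proof.
have split_mono i j k g : smono p q r i j k * g =
    (i == p)%:R * ((j == q)%:R * ((k == r)%:R * g)).
  by rewrite /smono; do 3 case: eqP => _; rewrite /= ?mul1r ?mul0r.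
rewrite -[LHS]/(smul (smono p q r) f a b c) /smul.
under eq_bigr => i _ do under eq_bigr => j _ do under eq_bigr => k _ do
  rewrite split_mono.
under eq_bigr => i _ do under eq_bigr => j _ do rewrite -!mulr_sumr.
under eq_bigr => i _ do rewrite -!mulr_sumr.
rewrite sum_natr_eqM; case: (leqP p a) => //= lepa.
rewrite sum_natr_eqM; case: (leqP q b) => //= leqb.
by rewrite sum_natr_eqM; case: (leqP r c) => //= lerc; rewrite !inordK.
Qed.

Lemma smonoM p q r p' q' r' :
  smono p q r * smono p' q' r' = smono (p + p') (q + q') (r + r').
Proof.
apply: series_ext => a b c; rewrite smonoM_coef /smono.
case: ifP => [/and3P [lepa leqb lerc] | /negbT not_le].
  congr (if _ then _ else _).
  by apply/and3P/and3P => -[/eqP ? /eqP ? /eqP ?]; split; apply/eqP; lia.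
by case: ifP => // /and3P [/eqP ? /eqP ? /eqP ?]; case/and3P: not_le; split; lia.
Qed.

Lemma smonoX p q r n : smono p q r ^+ n = smono (n * p) (n * q) (n * r).
Proof. by elim: n => [|n IH]; rewrite ?expr0 // exprS IH smonoM !mulSn. Qed.

Lemma smono_TX : smono 1 1 0 = sT * sX.
Proof. by rewrite /sT /sX smonoM. Qed.

Lemma lreg_sX : GRing.lreg sX.
Proof.
move=> f g eq_xfg; apply: series_ext => a b c.
have := congr1 (fun h : series => h a b.+1 c) eq_xfg.
by rewrite !smonoM_coef !leq0n /= !subn0 subn1.
Qed.

Definition bdiff (u : nat -> series) (m : nat) : series :=
  if m is m'.+1 then u m - u m' else u 0%N.

Section MonomialSums.

Variables p q r : nat.
Hypothesis deg_gt0 : (0 < p + q + r)%N.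
Local Notation z := (smono p q r).

(* sum_m z^m u_m: as z has positive degree, only the terms with m <= a + b + c
   contribute to the coefficient at (a, b, c) (msum_trunc). *)
Definition msum (u : nat -> series) : series :=
  fun a b c => (\sum_(m < (a + b + c).+1) z ^+ m * u m) a b c.

Lemma msum_coef u a b c : msum u a b c =
  \sum_(m < (a + b + c).+1) if [&& m * p <= a, m * q <= b & m * r <= c]%N
    then u m (a - m * p)%N (b - m * q)%N (c - m * r)%N else 0.
Proof. by rewrite /msum series_sumE; apply: eq_bigr => m _; rewrite smonoX smonoM_coef. Qed.

Lemma smonoXM_coef_high m (g : series) a b c :
  (a + b + c < m)%N -> (z ^+ m * g) a b c = 0.
Proof.
move=> ltm; rewrite smonoX smonoM_coef; case: ifP => // /and3P [? ? ?].
have : (m * (p + q + r) <= a + b + c)%N by rewrite !mulnDr; lia.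
by rewrite leqNgt (leq_trans ltm) // leq_pmulr.
Qed.

Lemma msum_trunc u N a b c : (a + b + c < N)%N ->
  msum u a b c = (\sum_(m < N) z ^+ m * u m) a b c.
Proof.
move=> ltN; rewrite /msum !series_sumE -(subnKC ltN) big_split_ord /=.
by rewrite [X in _ + X]big1 ?addr0 // => i _; rewrite smonoXM_coef_high // leq_addr.
Qed.

Lemma msumM_coef u g N a b c : (a + b + c < N)%N ->
  (msum u * g) a b c = ((\sum_(m < N) z ^+ m * u m) * g) a b c.
Proof.
move=> ltN; apply: eq_smul_below => // i j k lei lej lek.
by rewrite (@msum_trunc _ N) //; apply: leq_ltn_trans ltN; lia.
Qed.

Lemma msumMr u g : msum u * g = msum (fun m => u m * g).
Proof.
apply: series_ext => a b c; pose N := (a + b + c).+1.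
rewrite (@msumM_coef _ _ N) // (@msum_trunc _ N) // mulr_suml.
by under eq_bigr do rewrite -mulrA.
Qed.

Lemma msumMz u n :
  msum u * z ^+ n = msum (fun m => if (n <= m)%N then u (m - n)%N else 0).
Proof.
apply: series_ext => a b c; pose N := (a + b + c).+1.
rewrite (@msumM_coef _ _ N) // (@msum_trunc _ (n + N)) ?ltn_addl // big_split_ord /=.
rewrite [in RHS]big1 ?add0r => [|i _]; last by rewrite leqNgt ltn_ord /= mulr0.
rewrite mulr_suml; congr (_ a b c); apply: eq_bigr => i _.
by rewrite leq_addr addKn mulrAC -exprD addnC.
Qed.

Lemma msumB u v : msum (fun m => u m - v m) = msum u - msum v.
Proof.
apply: series_ext => a b c; rewrite /msum series_subE -series_subE -sumrB.
by under eq_bigr do rewrite mulrBr.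
Qed.

Lemma msum_fin u M : (forall m, (M <= m)%N -> u m = 0) ->
  msum u = \sum_(m < M) z ^+ m * u m.
Proof.
move=> u_eq0; apply: series_ext => a b c.
rewrite (@msum_trunc _ (M + (a + b + c).+1)) ?ltn_addl // big_split_ord /=.
by rewrite [X in _ + X]big1 ?addr0 // => i _; rewrite u_eq0 ?leq_addr // mulr0.
Qed.

Lemma msum_telescope u : (1 - z) * msum u = msum (bdiff u).
Proof.
rewrite mulrBl mul1r mulrC -[z]expr1 msumMz -msumB.
by congr msum; apply: funext => -[|m]; rewrite ?subr0 // subn1.
Qed.

End MonomialSums.

Lemma msumY_coef u a b c : (forall m a b c, (0 < c)%N -> u m a b c = 0) ->
  msum 0 0 1 u a b c = u c a b 0%N.
Proof.
move=> u_eq0; have ltc : (c < (a + b + c).+1)%N by rewrite ltnS leq_addl.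
rewrite msum_coef (bigD1 (Ordinal ltc)) //= !muln0 muln1 !subn0 subnn leqnn /=.
rewrite big1 ?addr0 // => -[m ltm] /= ne_mc; rewrite !muln0 muln1 !subn0 /=.
by case: leqP => // lemc; rewrite u_eq0 // subn_gt0 ltn_neqAle lemc andbT.
Qed.

(* The coefficient of t^a x^b counts the partitions with parts <= m, length b
   and weight a; by partgfS, partgf w m = prod_(v <= m) 1 / (1 - t^(w v) x). *)
Definition partgf (w : nat -> nat) (m : nat) : series :=
  fun a b c => if c == 0%N then (npart w m b a)%:Z else 0.

Definition euler_factor (w : nat -> nat) (v : nat) : series := 1 - smono (w v) 1 0.

Lemma partgf_ygt0 w m a b c : (0 < c)%N -> partgf w m a b c = 0.
Proof. by rewrite /partgf; case: c. Qed.

Lemma partgf0 w : partgf w 0 = 1.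
Proof.
apply: series_ext => a b c; rewrite /partgf npart0k /= /sone /smono.
by case: c => [|c] //=; case: a => [|a]; case: b.
Qed.

Lemma partgfS w m : partgf w m.+1 * euler_factor w m.+1 = partgf w m.
Proof.
apply: series_ext => a b c.
rewrite /euler_factor mulrBr mulr1 series_subE mulrC smonoM_coef /partgf subn0 leq0n andbT.
case: c => [|c] /=; last by rewrite if_same subr0.
case: b => [|b] /=; first by rewrite andbF subr0 !npartm0.
rewrite subn1 /= npartSS.
by case: (leqP (w m.+1) a) => /=; rewrite ?subr0 ?addn0 // PoszD addrK.
Qed.

Lemma partgf_prod w c n :
  partgf w (c + n) * \prod_(i < n) euler_factor w (c + i.+1) = partgf w c.
Proof.
elim: n => [|n IHn]; first by rewrite big_ord0 mulr1 addn0.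
by rewrite big_ord_recr /= mulrCA addnS partgfS mulrC IHn.
Qed.

Lemma bdiff_partgfS_coef w m a b : bdiff (partgf w) m.+1 a b 0%N =
  (count (fun s => (largest s == m.+1) && (wsum w s == a)) (decseqs m.+1 b))%:Z.
Proof.
by rewrite /bdiff series_subE /partgf /npart count_decseqsS PoszD addrAC subrr add0r.
Qed.

Section PeriodicWeight.

Variables (w : nat -> nat) (d e : nat).
Hypothesis w_periodic : forall v, w (v + d.+1)%N = w v.
Hypothesis w_const : forall v, (2 <= v <= d.+1)%N -> w v = e.
Local Notation B := (1 - smono e 1 0).
Local Notation A := (euler_factor w 1 * B ^+ d).

Lemma prod_euler_factor_period c : \prod_(i < d.+1) euler_factor w (c + i.+1) = A.
Proof.
elim: c => [|c IHc].
  rewrite big_ord_recl /=; congr (_ * _); rewrite -[d in RHS]card_ord -prodr_const.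
  apply: eq_bigr => i _; rewrite /euler_factor w_const // /bump /=.
  by have := ltn_ord i; lia.
rewrite -IHc big_ord_recr big_ord_recl /= mulrC; congr (_ * _).
  by rewrite /euler_factor w_periodic addn1.
by apply: eq_bigr => i _; rewrite /bump /= addSnnS.
Qed.

Lemma partgf_period c : partgf w (c + d.+1) * A = partgf w c.
Proof. by rewrite -(prod_euler_factor_period c) partgf_prod. Qed.

Lemma partgf_mul_period r : (0 < r <= d)%N -> partgf w r * A = B ^+ (d.+1 - r).
Proof.
move=> /andP [r_gt0 le_rd]; set k := (d.+1 - r)%N.
rewrite -(prod_euler_factor_period 0) -(subnKC (leqW le_rd)) -/k big_split_ord /= mulrA.
rewrite -[r in partgf w r]add0n partgf_prod partgf0 mul1r.
rewrite -[X in _ = B ^+ X]card_ord -prodr_const; apply: eq_bigr => i _.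
by rewrite /euler_factor w_const //; have := ltn_ord i; rewrite /k; lia.
Qed.

Lemma msum_partgf p q r : (0 < p + q + r)%N ->
  msum p q r (partgf w) * (A - smono p q r ^+ d.+1) =
  A - B ^+ d.+1 + B * \sum_(i < d.+1) B ^+ (d - i) * smono p q r ^+ i.
Proof.
move=> deg_gt0; rewrite mulrBr msumMr // msumMz // -msumB //.
rewrite (@msum_fin _ _ _ deg_gt0 _ d.+1) => [|m le_dm]; last first.
  by rewrite le_dm -{1}(subnK le_dm) partgf_period subrr.
rewrite big_ord_recl big_ord_recl /= partgf0 !subn0 !mul1r !mulr1 subr0.
rewrite mulrDr -exprS addrA subrK; congr (_ + _).
rewrite mulr_sumr; apply: eq_bigr => i _.
rewrite /bump /= add1n ltnNge ltn_ord subr0 partgf_mul_period ?ltn_ord //.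
by rewrite mulrA -exprS -subSn ?ltn_ord // mulrC.
Qed.

End PeriodicWeight.

(* Multiply by z - B: the sum times B - z is B^(d+1) - z^(d+1) (subrXX). *)
Lemma periodic_gf_closed_form (R : comNzRingType) (z B C S : R) d :
  S * (C * B ^+ d - z ^+ d.+1) =
    C * B ^+ d - B ^+ d.+1 + B * \sum_(i < d.+1) B ^+ (d - i) * z ^+ i ->
  ((1 - z) * S - 1) * (C * B ^+ d - z ^+ d.+1) * (z - B) =
    z * (z ^+ d.+1 * (1 - B) - (z - B) * C * B ^+ d - (1 - z) * B ^+ d.+1).
Proof.
have := subrXX B z d.+1; rewrite /= => geom.
set U := \sum_(i < d.+1) _ in geom *; set A := C * B ^+ d => S_eq.
transitivity ((1 - z) * (z - B) * (S * (A - z ^+ d.+1)) - (A - z ^+ d.+1) * (z - B)).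
  by ring.
rewrite S_eq; transitivity ((1 - z) * (z - B) * (A - B ^+ d.+1)
  - (1 - z) * B * ((B - z) * U) - (A - z ^+ d.+1) * (z - B)); first by ring.
by rewrite -geom /A !exprS; ring.
Qed.

Lemma largest_part_gf d :
  ((fun a b c => Posz (coefA d a b c)) : series) =
  (1 - sY) * msum 0 0 1 (partgf (mod_weight d)) - 1.
Proof.
apply: series_ext => a b c.
rewrite msum_telescope // series_subE msumY_coef => [|m a' b' c' c_gt0]; last first.
  by case: m => [|m]; rewrite /bdiff ?series_subE !partgf_ygt0 ?subrr.
rewrite coefA_decseqs; case: c => [|c].
  by rewrite /= partgf0 subrr; case: b.
rewrite series1E !andbF subr0 bdiff_partgfS_coef; congr Posz.
apply: eq_in_count => s; rewrite mem_decseqs => /and3P [_ dec_s /allP bounded_s].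
have pos_s : all (fun v => 0 < v)%N s by apply/allP => v /bounded_s /andP [].
by case: s dec_s pos_s {bounded_s} => [|x s] dec_s pos_s; rewrite /is_partition ?dec_s ?pos_s.
Qed.

Lemma perimeter_gf d :
  sX * ((fun a b c => if c == 0%N then Posz (coefB d a b) else 0) : series) =
  (1 - sX) * msum 0 1 0 (partgf (mod'_weight d)) - 1.
Proof.
apply: series_ext => a b c.
rewrite msum_telescope // series_subE smonoM_coef msum_coef series1E /=.
under eq_bigr do rewrite !muln0 muln1 !leq0n !subn0 andbT /=.
case: c => [|c]; last first.
  rewrite !andbF subr0 if_same big1 // => -[[|m] ltm] _ /=; first by rewrite partgf_ygt0.
  by case: ifP; rewrite // series_subE !partgf_ygt0 ?subrr.
rewrite !subn0 andbT; case: b => [|g] /=.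
  by rewrite big_ord_recl /= partgf0 series1E big1 ?addr0 ?subrr.
have le_gN : (g.+2 <= (a + g.+1 + 0).+1)%N by rewrite addn0 ltnS leq_addl.
rewrite andbF [X in _ - X]/= subr0 subn1 -(subnKC le_gN) big_split_ord /=.
rewrite [X in _ + X]big1 => [|i _]; last by rewrite leqNgt ltnS leq_addr.
rewrite addr0 big_ord_recl /= partgf0 series1E andbF add0r coefB_decseqs.
rewrite (big_morph Posz PoszD (erefl 0%:Z)); apply: eq_bigr => i _.
by rewrite /bump leq0n add1n ltn_ord add0n subSS -bdiff_partgfS_coef.
Qed.

Lemma largest_part_identity d :
  let F : series := fun a b c => Posz (coefA d a b c) in
  F * (((1 - sT * sX) * (1 - sX) ^+ d - sY ^+ d.+1) * (sX + sY - 1)) =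
  sT * sX * sY * (1 - sX) ^+ d * (sX + sY - 1)
    + sX * sY * (sY ^+ d.+1 - sY * (1 - sX) ^+ d).
Proof.
have := @msum_partgf (mod_weight d) d 0
  (mod_weight_periodic d) (@mod_weight_ne1 d) 0 0 1 isT.
rewrite /euler_factor mod_weight1 -/sY -/sX smono_TX => /periodic_gf_closed_form.
rewrite largest_part_gf; set S := msum _ _ _ _; set C := 1 - _; set B := 1 - sX => id_S.
rewrite mulrA (_ : sX + sY - 1 = sY - B); last by rewrite /B; ring.
by rewrite id_S /C /B !exprS; ring.
Qed.

Lemma perimeter_identity d :
  let G : series := fun a b c => if c == 0%N then Posz (coefB d a b) else 0 in
  G * ((1 - sX - sT * sX) * ((1 - sT * sX) ^+ d * (sX - 1) + sX ^+ d.+1)) =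
  sX * (sT * sX ^+ d.+1 + (1 - sT * sX) ^+ d * (sX - 1)).
Proof.
have := @msum_partgf (mod'_weight d) d 1
  (mod'_weight_periodic d) (@mod'_weight_ne1 d) 0 1 0 isT.
rewrite /euler_factor mod'_weight1 -/sX smono_TX => /periodic_gf_closed_form.
set S := msum _ _ _ _; set B := 1 - sT * sX => id_S; apply: lreg_sX.
rewrite mulrA perimeter_gf -/S.
rewrite (_ : (1 - sX - sT * sX) * _ = ((1 - sX) * B ^+ d - sX ^+ d.+1) * (sX - B)).
  by rewrite [LHS]mulrA id_S /B !exprS; ring.
by rewrite /B !exprS; ring.
Qed.

Local Close Scope ring_scope.

Theorem lemma3p1 (d : nat) (hd : (1 <= d)%N) :
  let F : series := fun a b c => Posz (coefA d a b c) in
  let G : series := fun a b c => if c == 0%N then Posz (coefB d a b) else 0%R in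
  ((F * (((1 - sT * sX) * (1 - sX) ^ d - sY ^ d.+1) * (sX + sY - 1))
    = sT * sX * sY * (1 - sX) ^ d * (sX + sY - 1)
      + sX * sY * (sY ^ d.+1 - sY * (1 - sX) ^ d))%ser
  /\
  (G * ((1 - sX - sT * sX) * ((1 - sT * sX) ^ d * (sX - 1) + sX ^ d.+1))
    = sX * (sT * sX ^ d.+1 + (1 - sT * sX) ^ d * (sX - 1)))%ser).
Proof.
move=> F G; rewrite !spowE.
by split; [exact: largest_part_identity | exact: perimeter_identity].
Qed.
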